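(* Let $X$ be a set, $F:\mathcal{P}(X)\to\mathcal{P}(X)$ an interior operator, and $\kappa$ a cardinal. Suppose that $(\mathbf{Fix}(F),\subseteq,\bigcup)$ has no basis indexed by a set of cardinality $\kappa$. Then there is no set $Y$ of cardinality less than $\kappa$ together with a relation $r\subseteq X\times Y$ such that $F=\langle r\rangle\circ[r^{\sim}]$.
   Context: An interior operator on $\mathcal{P}(X)$ is a map $F$ that is monotonic, contractive ($F(U)\subseteq U$), and satisfies $F(U)\subseteq F(F(U))$; $\mathbf{Fix}(F)=\{U\subseteq X\mid F(U)=U\}$, a complete sup-lattice under inclusion and unions. A basis of a complete sup-lattice $(L,\leq,\bigvee)$ is a family $(x_i)_{i\in I}$ of elements of $L$ (repetitions allowed) such that for every $y\in L$, $y=\bigvee\{x_i\mid x_i\leq y\}$; it is indexed by $I$. For $r\subseteq X\times Y$, $r^{\sim}=\{(y,x)\mid (x,y)\in r\}$. For $t\subseteq A\times B$, $\langle t\rangle,[t]:\mathcal{P}(B)\to\mathcal{P}(A)$ are $\langle t\rangle(V)=\{a\mid \exists b,\ (a,b)\in t\wedge b\in V\}$ and $[t](V)=\{a\mid \forall b,\ (a,b)\in t\Rightarrow b\in V\}$. *)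

Set Implicit Arguments.

Definition subset {X : Type} (U V : X -> Prop) : Prop := forall x, U x -> V x.

Definition interior_operator {X : Type} (F : (X -> Prop) -> (X -> Prop)) : Prop :=
  (forall U V, subset U V -> subset (F U) (F V)) /\
  (forall U, subset (F U) U) /\
  (forall U, subset (F U) (F (F U))).

Definition Fix {X : Type} (F : (X -> Prop) -> (X -> Prop)) (U : X -> Prop) : Prop :=
  F U = U.

Definition is_basis_Fix {X I : Type} (F : (X -> Prop) -> (X -> Prop))
  (x : I -> (X -> Prop)) : Prop :=
  (forall i, Fix F (x i)) /\
  (forall y, Fix F y -> y = (fun a => exists i, subset (x i) y /\ x i a)).

Definition conv {A B : Type} (r : A -> B -> Prop) : B -> A -> Prop :=
  fun b a => r a b.

Definition diam {A B : Type} (t : A -> B -> Prop) (V : B -> Prop) : A -> Prop :=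
  fun a => exists b, t a b /\ V b.

Definition box {A B : Type} (t : A -> B -> Prop) (V : B -> Prop) : A -> Prop :=
  fun a => forall b, t a b -> V b.

(* Cardinal comparisons between types (a cardinal kappa is represented
   by a type K of cardinality kappa). *)
Definition card_le (A B : Type) : Prop :=
  exists f : A -> B, forall a1 a2, f a1 = f a2 -> a1 = a2.
Definition card_eq (A B : Type) : Prop :=
  exists f : A -> B, (forall a1 a2, f a1 = f a2 -> a1 = a2) /\
                     (forall b, exists a, f a = b).
Definition card_lt (A B : Type) : Prop := card_le A B /\ ~ card_le B A.

(* Writing [F = <r> o [r~]], a fixed point [U] of [F] is exactly the union of
   the columns [{a | r a y}] it contains, and every column is fixed; so the
   columns form a basis of [Fix F] indexed by [Y].  Pushing this basis along an
   injection [Y -> K] (unions of fixed points of an interior operator are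
   fixed, and each new member is a single column or empty) gives a basis
   indexed by [K], which was excluded. *)

From Stdlib Require Import FunctionalExtensionality PropExtensionality.

Lemma set_ext {X : Type} (U V : X -> Prop) : subset U V -> subset V U -> U = V.
Proof.
  intros HUV HVU. apply functional_extensionality; intro a.
  apply propositional_extensionality; split; [apply HUV | apply HVU].
Qed.

Lemma card_eq_refl (A : Type) : card_eq A A.
Proof. exists (fun a => a); split; eauto. Qed.

Lemma Fix_union {X I : Type} (F : (X -> Prop) -> (X -> Prop))
    (P : I -> Prop) (x : I -> (X -> Prop)) :
  interior_operator F -> (forall i, Fix F (x i)) ->
  Fix F (fun a => exists i, P i /\ x i a).
Proof.
  intros [Fmono [Fcontr _]] Hfix. apply set_ext; [apply Fcontr |].
  intros a [i [HPi Hxi]].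
  apply (Fmono (x i)); [intros b Hb; exists i; auto |].
  rewrite (Hfix i). exact Hxi.
Qed.

Definition reindex {I J X : Type} (g : I -> J) (x : I -> (X -> Prop)) :
  J -> (X -> Prop) :=
  fun j a => exists i, g i = j /\ x i a.

Lemma is_basis_Fix_reindex {X I J : Type} (F : (X -> Prop) -> (X -> Prop))
    (x : I -> (X -> Prop)) (g : I -> J) :
  interior_operator F -> (forall i1 i2, g i1 = g i2 -> i1 = i2) ->
  is_basis_Fix F x -> is_basis_Fix F (reindex g x).
Proof.
  intros HF g_inj [Hfix Hspan]. split.
  - intro j. exact (Fix_union F (fun i => g i = j) x HF Hfix).
  - intros y Hy. rewrite (Hspan y Hy) at 1. apply set_ext.
    + intros a [i [Hxi_y Hxi_a]]. exists (g i). split.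
      * intros b [i' [Hgi' Hxi'_b]].
        apply Hxi_y. rewrite <- (g_inj _ _ Hgi'). exact Hxi'_b.
      * exists i; auto.
    + intros a [j [Hxj_y [i [Hgi Hxi_a]]]]. exists i. split.
      * intros b Hb. apply Hxj_y. exists i; auto.
      * exact Hxi_a.
Qed.

Definition column {X Y : Type} (r : X -> Y -> Prop) (y : Y) : X -> Prop :=
  fun a => r a y.

Lemma is_basis_Fix_columns {X Y : Type} (r : X -> Y -> Prop) :
  is_basis_Fix (fun U => diam r (box (conv r) U)) (column r).
Proof.
  split.
  - intro y. apply set_ext.
    + intros a [y' [Hay' Hbox]]. exact (Hbox a Hay').
    + intros a Hay. exists y. split; [exact Hay |]. intros a' Ha'. exact Ha'.
  - intros U HU. rewrite <- HU at 1. apply set_ext.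
    + intros a [y [Hay Hbox]]. exists y. split; [exact Hbox | exact Hay].
    + intros a [y [Hbox Hay]]. exists y. split; [exact Hay | exact Hbox].
Qed.

Theorem lemma6 (X K : Type) (F : (X -> Prop) -> (X -> Prop)) :
  interior_operator F ->
  (forall (I : Type) (x : I -> (X -> Prop)), card_eq I K -> ~ is_basis_Fix F x) ->
  ~ (exists (Y : Type) (r : X -> Y -> Prop),
       card_lt Y K /\ F = (fun U => diam r (box (conv r) U))).
Proof.
  intros HF Hno_basis [Y [r [[[g g_inj] _] HFr]]].
  apply (Hno_basis K (reindex g (column r)) (card_eq_refl K)).
  apply is_basis_Fix_reindex; [exact HF | exact g_inj |].
  rewrite HFr. apply is_basis_Fix_columns.
Qed.
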